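(* Let $p,q$ be distinct positive integers and $n\ge 1$. For every state $x=(x_1,\dots,x_n)\in\{p,q\}^n$, every sequence $s=(s_1,\dots,s_m)$ of elements of $\{p,q\}$ with $m\ge 1$, and every $k\in\{1,\dots,m\}$, $$RLD^{p,q}_n(x, s_{1:m}) = RLD^{p,q}_n(x, s_{1:k}) \circ RLD^{p,q}_n\big(A^{p,q}_n(x, s_{1:k}), s_{k+1:m}\big),$$ where $\circ$ denotes concatenation of finite sequences, $s_{i:j}=(s_i,\dots,s_j)$, and $s_{k+1:m}$ is the empty sequence when $k=m$.
   Context: Let $p,q$ be distinct positive integers. Define $\mathrm{Opp}(p)=q$, $\mathrm{Opp}(q)=p$. For $x\in\{p,q\}$ and a finite sequence $s=(s_1,\dots,s_m)$ of positive integers, the run-length decoding $RLD^{p,q}(x,s)$ is the sequence over $\{p,q\}$ consisting of $s_1$ copies of $x$, followed by $s_2$ copies of $\mathrm{Opp}(x)$, followed by $s_3$ copies of $x$, and so on alternately (so it begins with $x$ and has run lengths $s_1,\dots,s_m$); the decoding of the empty sequence is empty. For $n\ge1$ and $x=(x_1,\dots,x_n)\in\{p,q\}^n$, the $n$-iterated decoding is defined by $RLD^{p,q}_1(x_1,s)=RLD^{p,q}(x_1,s)$ and $RLD^{p,q}_n(x_{1:n},s)=RLD^{p,q}(x_n, RLD^{p,q}_{n-1}(x_{1:n-1},s))$. For a nonempty sequence $t$ over $\{p,q\}$, $\mathrm{OppEnd}(t)=\mathrm{Opp}(\text{last entry of } t)$. The automaton $A^{p,q}_n$ has state set $\{p,q\}^n$;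 for a state $x$ and a nonempty finite sequence $s$ over $\{p,q\}$, $A^{p,q}_n(x,s)\in\{p,q\}^n$ is the state whose $i$-th coordinate is $\mathrm{OppEnd}(RLD^{p,q}_i(x_{1:i},s))$ for $i=1,\dots,n$. *)

From mathcomp Require Import all_boot.
Set Implicit Arguments. Unset Strict Implicit. Unset Printing Implicit Defensive.

(* Opp over the alphabet {p,q} (values outside are sent to p; never used). *)
Definition Opp (p q x : nat) : nat := if x == p then q else p.

Fixpoint RLD (p q x : nat) (s : seq nat) : seq nat :=
  match s with
  | [::] => [::]
  | a :: s' => nseq a x ++ RLD p q (Opp p q x) s'
  end.

(* n-iterated decoding: RLD_n(x_{1:n}, s) = RLD(x_n, RLD_{n-1}(x_{1:n-1}, s)),
   with xs = [:: x_1; ...; x_n]; RLD_1(x_1,s) = RLD(x_1,s). *)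
Definition RLDn (p q : nat) (xs s : seq nat) : seq nat :=
  foldl (fun t xi => RLD p q xi t) s xs.

(* OppEnd(t) = Opp(last entry of t), meaningful for nonempty t. *)
Definition OppEnd (p q : nat) (t : seq nat) : nat := Opp p q (last 0 t).

(* A_n^{p,q}(x, s): i-th coordinate is OppEnd(RLD_i(x_{1:i}, s)), i = 1..n. *)
Definition Aut (p q : nat) (x s : seq nat) : seq nat :=
  mkseq (fun i => OppEnd p q (RLDn p q (take i.+1 x) s)) (size x).

From mathcomp Require Import all_boot.

(* Decoding a ++ b decodes b from the symbol iter (size a) Opp x.  If the last
   run length of a is positive, that symbol is OppEnd of the decoding of a, and
   for positive letters this decoding again ends with a positive run, so the
   splitting propagates through every level of the iterated decoding. *)

Section Decoding.
Variables p q : nat.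

Lemma RLD_cat x a b :
  RLD p q x (a ++ b) = RLD p q x a ++ RLD p q (iter (size a) (Opp p q) x) b.
Proof.
elim: a x => [|c a IHa] x //=.
by rewrite IHa catA -iterSr.
Qed.

Lemma last_RLD_rcons y x a c : 0 < c ->
  last y (RLD p q x (rcons a c)) = iter (size a) (Opp p q) x.
Proof.
rewrite -cats1 RLD_cat /= cats0 last_cat.
by case: c => // c _ /=; elim: c.
Qed.

Lemma OppEnd_RLD x a : 0 < last 0 a ->
  OppEnd p q (RLD p q x a) = iter (size a) (Opp p q) x.
Proof.
case/lastP: a => [|a c] //; rewrite last_rcons => c_gt0.
by rewrite /OppEnd last_RLD_rcons // size_rcons iterS.
Qed.

Lemma Aut_cons x xs a :
  Aut p q (x :: xs) a = OppEnd p q (RLD p q x a) :: Aut p q xs (RLD p q x a).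
Proof.
rewrite /Aut /mkseq /= take0 -[1]addn0 iotaDl -map_comp.
by congr (_ :: map _ _).
Qed.

Hypotheses (p_gt0 : 0 < p) (q_gt0 : 0 < q).

Lemma iter_Opp_gt0 n x : 0 < x -> 0 < iter n (Opp p q) x.
Proof. by case: n => //= n _; rewrite /Opp; case: ifP. Qed.

Lemma last_RLD_gt0 x a : 0 < x -> 0 < last 0 a -> 0 < last 0 (RLD p q x a).
Proof.
case/lastP: a => [|a c] //; rewrite last_rcons => x_gt0 c_gt0.
by rewrite last_RLD_rcons // iter_Opp_gt0.
Qed.

Lemma RLDn_cat xs a b : all (leq 1) xs -> 0 < last 0 a ->
  RLDn p q xs (a ++ b) = RLDn p q xs a ++ RLDn p q (Aut p q xs a) b.
Proof.
elim: xs a b => [|x xs IHxs] a b // /andP [x_gt0 xs_gt0] a_last_gt0.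
rewrite Aut_cons /RLDn /= -!/(RLDn p q xs _) RLD_cat -OppEnd_RLD //.
by rewrite IHxs // last_RLD_gt0.
Qed.

End Decoding.

Theorem proposition1 (p q n : nat) (x s : seq nat) (k : nat) :
  0 < p -> 0 < q -> p != q -> 1 <= n ->
  size x = n -> all (fun y => (y == p) || (y == q)) x ->
  1 <= size s -> all (fun y => (y == p) || (y == q)) s ->
  1 <= k <= size s ->
  RLDn p q x s =
    RLDn p q x (take k s) ++ RLDn p q (Aut p q x (take k s)) (drop k s).
Proof.
move=> p_gt0 q_gt0 _ _ _ x_pq _ s_pq /andP [k_gt0 k_le].
have pq_gt0 t : all (fun y => (y == p) || (y == q)) t -> all (leq 1) t.
  by move/allP=> t_pq; apply/allP=> y /t_pq /orP [] /eqP ->.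
have last_take_gt0 : 0 < last 0 (take k s).
  have : size (take k s) != 0.
    by rewrite size_take_min -lt0n leq_min k_gt0 (leq_trans k_gt0).
  case/lastP E: (take k s) => [|t c] //= _; rewrite last_rcons.
  have /allP -> // := pq_gt0 _ s_pq.
  by rewrite -(cat_take_drop k s) E mem_cat mem_rcons mem_head.
by rewrite -RLDn_cat ?cat_take_drop ?pq_gt0.
Qed.
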